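(* Let $\omega$ be a rectilinearly-convex obstacle that is a rectangle (i.e. has exactly four extreme corners). Then $\{d\}$ is a minimum skeleton for $\omega$, where $d$ is either of the two diagonals of $\omega$.
   Context: An obstacle $\omega$ is a simple polygon in $\mathbb{R}^2$ (a closed, bounded polygonal region without holes whose boundary does not intersect itself), assumed in general position (no three of its vertices are collinear); vertices and edges of $\omega$ are those of its boundary. $\omega$ is rectilinear if each edge is horizontal or vertical, and a rectilinear obstacle is rectilinearly-convex if any two points of $\omega$ can be joined by a shortest rectilinear path (made of horizontal and vertical segments, of minimum $\ell_1$ length) contained in $\omega$. A corner point of a rectilinear path is a point where a horizontal and a vertical segment of the path meet. A set $S$ of closed line segments is inside $\omega$ if the union of its elements is contained in $\omega$. Such an $S$ is a skeleton for $\omega$ if for every pair of points $p,q$ not in the interior of $\omega$ such that every shortest rectilinear path between $p$ and $q$ with at most one corner point meets the interior of $\omega$, each such path intersects some element of $S$; a minimum skeleton is one with the fewest segments. $B(\omega)$ is the smallest closed axis-parallel rectangle containing $\omega$; the extreme edges are the edges of $\omega$ lying on the boundary of $B(\omega)$; an extreme corner is a vertex of $\omega$ that is a common endpoint of two extreme edges. A diagonal of $\omega$ is a line segment contained in $\omega$ joining two diagonally opposite extreme corners. *)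

From Stdlib Require Import Reals Lra List.
Import ListNotations.
Open Scope R_scope.

Definition pt := (R * R)%type.

Definition seg_pts (a b : pt) (z : pt) : Prop :=
  exists t, 0 <= t <= 1 /\
    fst z = (1 - t) * fst a + t * fst b /\
    snd z = (1 - t) * snd a + t * snd b.

Definition segment := (pt * pt)%type.
Definition seg_set (s : segment) : pt -> Prop := seg_pts (fst s) (snd s).

Definition l1dist (a b : pt) : R := Rabs (fst a - fst b) + Rabs (snd a - snd b).

Definition hstep (a b : pt) : Prop := snd a = snd b /\ fst a <> fst b.
Definition vstep (a b : pt) : Prop := fst a = fst b /\ snd a <> snd b.

Fixpoint rpath (p : pt) (l : list pt) : Prop :=
  match l with
  | nil => True
  | b :: l' => (hstep p b \/ vstep p b) /\ rpath b l'
  end.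

Definition rend (p : pt) (l : list pt) : pt := last l p.

Fixpoint plen (p : pt) (l : list pt) : R :=
  match l with
  | nil => 0
  | b :: l' => l1dist p b + plen b l'
  end.

Fixpoint on_path (p : pt) (l : list pt) (z : pt) : Prop :=
  match l with
  | nil => z = p
  | b :: l' => seg_pts p b z \/ on_path b l' z
  end.

(* number of corner points: interior vertices where a horizontal and a
   vertical segment meet (steps are nondegenerate, so a step a->b is
   horizontal iff snd a = snd b) *)
Fixpoint ncorners (p : pt) (l : list pt) : nat :=
  match l with
  | b :: ((c :: _) as l') =>
      ((if Req_EM_T (snd p) (snd b) then
          (if Req_EM_T (snd b) (snd c) then 0 else 1)
        else (if Req_EM_T (snd b) (snd c) then 1 else 0)) + ncorners b l')%nat
  | _ => 0%nat
  end.

Definition shortest_rpath (p q : pt) (l : list pt) : Prop :=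
  rpath p l /\ rend p l = q /\
  forall l', rpath p l' -> rend p l' = q -> plen p l <= plen p l'.

Definition short1 (p q : pt) (l : list pt) : Prop :=
  shortest_rpath p q l /\ (ncorners p l <= 1)%nat.

Definition interior (w : pt -> Prop) (z : pt) : Prop :=
  exists e, 0 < e /\ forall y, Rabs (fst y - fst z) < e ->
                             Rabs (snd y - snd z) < e -> w y.

Definition inside (w : pt -> Prop) (S : list segment) : Prop :=
  forall s z, In s S -> seg_set s z -> w z.

Definition skeleton (w : pt -> Prop) (S : list segment) : Prop :=
  inside w S /\
  forall p q, ~ interior w p -> ~ interior w q ->
    (forall l, short1 p q l -> exists z, on_path p l z /\ interior w z) ->
    forall l, short1 p q l ->
      exists s z, In s S /\ seg_set s z /\ on_path p l z.

Definition min_skeleton (w : pt -> Prop) (S : list segment) : Prop :=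
  skeleton w S /\ forall S', skeleton w S' -> (length S <= length S')%nat.

Definition rect (x1 x2 y1 y2 : R) (z : pt) : Prop :=
  x1 <= fst z <= x2 /\ y1 <= snd z <= y2.

From Pilot Require Import Defs.
From Stdlib Require Import Reals Lra Lia List.
Import ListNotations.
Open Scope R_scope.

(* A shortest rectilinear path is monotone in both coordinates, so one with at most one
   corner covers one of the two L-shaped paths from p to q (horizontal leg first or
   vertical leg first), and both L's are themselves shortest paths with at most one
   corner.  If both L's enter the open rectangle while p and q lie outside it, each L
   crosses the diagonal: an affine change of coordinates takes the rectangle to the unit
   square and d to its main diagonal, where this is linear arithmetic.  Hence every such
   path meets d.  No skeleton is empty, since the horizontal chord through the middle of
   the rectangle must be met. *)

Definition between (a x c : R) : Prop := a <= x <= c \/ c <= x <= a.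

Definition swap (z : pt) : pt := (snd z, fst z).

Definition hv_L (p q z : pt) : Prop :=
  (snd z = snd p /\ between (fst p) (fst z) (fst q)) \/
  (fst z = fst q /\ between (snd p) (snd z) (snd q)).

Definition vh_L (p q z : pt) : Prop := hv_L (swap p) (swap q) (swap z).

Definition tight (p : pt) (l : list pt) : Prop := plen p l = l1dist p (rend p l).

Lemma between_split a b c x :
  between a b c -> between a x c -> between a x b \/ between b x c.
Proof. unfold between; lra. Qed.

Lemma between_ratio a x c : a <> c -> between a x c -> 0 <= (x - a) / (c - a) <= 1.
Proof.
  intros Hac Hx.
  assert (E : x - a = (x - a) / (c - a) * (c - a)) by (field; lra).
  set (t := (x - a) / (c - a)) in *; unfold between in Hx; split; nra.
Qed.

Lemma swap_involutive z : swap (swap z) = z.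
Proof. now destruct z. Qed.

Lemma swap_inj a b : swap a = swap b -> a = b.
Proof. intros E; rewrite <- (swap_involutive a), E; apply swap_involutive. Qed.

Lemma seg_pts_swap a b z : seg_pts (swap a) (swap b) (swap z) <-> seg_pts a b z.
Proof. unfold seg_pts; simpl; firstorder. Qed.

Lemma seg_pts_horizontal a b z : snd a = snd b ->
  seg_pts a b z <-> snd z = snd a /\ between (fst a) (fst z) (fst b).
Proof.
  intros Hab; split.
  - intros (t & Ht & Hx & Hy); split; [rewrite Hy, <- Hab; ring|].
    rewrite Hx; unfold between.
    destruct (Rle_dec (fst a) (fst b)); [left|right]; split; nra.
  - intros [Hz Hb]; destruct (Req_EM_T (fst a) (fst b)) as [E|E].
    + exists 0; unfold between in Hb; repeat split; lra.
    + exists ((fst z - fst a) / (fst b - fst a)); repeat split.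
      1, 2: apply between_ratio; auto.
      * field; lra.
      * rewrite Hz, <- Hab; ring.
Qed.

Lemma seg_pts_vertical a b z : fst a = fst b ->
  seg_pts a b z <-> fst z = fst a /\ between (snd a) (snd z) (snd b).
Proof. intros Hab; rewrite <- seg_pts_swap; apply seg_pts_horizontal, Hab. Qed.

Lemma rend_cons p b l : rend p (b :: l) = rend b l.
Proof.
  unfold rend; revert b; induction l as [|c l IH]; intros b; [reflexivity|].
  destruct l; [reflexivity|]; apply IH.
Qed.

Lemma rend_swap p l : rend (swap p) (map swap l) = swap (rend p l).
Proof.
  revert p; induction l as [|b l IH]; intros p; [reflexivity|].
  simpl map; rewrite !rend_cons; apply IH.
Qed.

Lemma rpath_swap p l : rpath (swap p) (map swap l) <-> rpath p l.
Proof.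
  revert p; induction l as [|b l IH]; intros p; simpl; [tauto|].
  rewrite IH; unfold hstep, vstep; simpl; tauto.
Qed.

Lemma l1dist_swap a b : l1dist (swap a) (swap b) = l1dist a b.
Proof. unfold l1dist; simpl; ring. Qed.

Lemma plen_swap p l : plen (swap p) (map swap l) = plen p l.
Proof.
  revert p; induction l as [|b l IH]; intros p; simpl; [reflexivity|].
  rewrite IH, l1dist_swap; reflexivity.
Qed.

Lemma tight_swap p l : tight (swap p) (map swap l) <-> tight p l.
Proof. unfold tight; rewrite plen_swap, rend_swap, l1dist_swap; tauto. Qed.

Lemma on_path_swap p l z : on_path (swap p) (map swap l) (swap z) <-> on_path p l z.
Proof.
  revert p; induction l as [|b l IH]; intros p; simpl.
  - split; [apply swap_inj|intros ->; reflexivity].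
  - rewrite IH, seg_pts_swap; tauto.
Qed.

Lemma ncorners_cons_cons p b c l : ncorners p (b :: c :: l) =
  ((if Req_EM_T (snd p) (snd b) then (if Req_EM_T (snd b) (snd c) then 0 else 1)
    else (if Req_EM_T (snd b) (snd c) then 1 else 0)) + ncorners b (c :: l))%nat.
Proof. reflexivity. Qed.

Lemma ncorners_straight p b c l :
  (hstep p b /\ hstep b c) \/ (vstep p b /\ vstep b c) ->
  ncorners p (b :: c :: l) = ncorners b (c :: l).
Proof.
  unfold hstep, vstep; rewrite ncorners_cons_cons.
  destruct (Req_EM_T (snd p) (snd b)), (Req_EM_T (snd b) (snd c)); intuition.
Qed.

Lemma ncorners_turn p b c l :
  (hstep p b /\ vstep b c) \/ (vstep p b /\ hstep b c) ->
  ncorners p (b :: c :: l) = S (ncorners b (c :: l)).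
Proof.
  unfold hstep, vstep; rewrite ncorners_cons_cons.
  destruct (Req_EM_T (snd p) (snd b)), (Req_EM_T (snd b) (snd c)); intuition.
Qed.

Lemma ncorners_swap p l : rpath p l -> ncorners (swap p) (map swap l) = ncorners p l.
Proof.
  revert p; induction l as [|b [|c l] IH]; intros p Hr; [reflexivity|reflexivity|].
  destruct Hr as [Hpb [Hbc Hr]].
  assert (IHb : ncorners (swap b) (map swap (c :: l)) = ncorners b (c :: l))
    by (apply IH; split; assumption).
  simpl map in *.
  destruct Hpb as [Hpb|Hpb], Hbc as [Hbc|Hbc];
    [rewrite !ncorners_straight|rewrite !ncorners_turn|rewrite !ncorners_turn
    |rewrite !ncorners_straight]; try rewrite IHb; auto.
Qed.

Lemma l1dist_triangle a b c : l1dist a c <= l1dist a b + l1dist b c.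
Proof.
  unfold l1dist.
  pose proof (Rabs_triang (fst a - fst b) (fst b - fst c)).
  pose proof (Rabs_triang (snd a - snd b) (snd b - snd c)).
  replace (fst a - fst c) with ((fst a - fst b) + (fst b - fst c)) by ring.
  replace (snd a - snd c) with ((snd a - snd b) + (snd b - snd c)) by ring.
  lra.
Qed.

Lemma l1dist_refl a : l1dist a a = 0.
Proof. unfold l1dist; rewrite !Rminus_diag, Rabs_R0; ring. Qed.

Lemma l1dist_rend_le_plen p l : l1dist p (rend p l) <= plen p l.
Proof.
  revert p; induction l as [|b l IH]; intros p.
  - rewrite l1dist_refl; simpl; lra.
  - rewrite rend_cons; simpl.
    pose proof (IH b); pose proof (l1dist_triangle p b (rend b l)); lra.
Qed.

Lemma between_of_Rabs a b c : Rabs (a - b) + Rabs (b - c) <= Rabs (a - c) -> between a b c.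
Proof.
  unfold between, Rabs.
  destruct (Rcase_abs (a - b)), (Rcase_abs (b - c)), (Rcase_abs (a - c)); lra.
Qed.

Lemma between_of_l1dist a b c : l1dist a b + l1dist b c <= l1dist a c ->
  between (fst a) (fst b) (fst c) /\ between (snd a) (snd b) (snd c).
Proof.
  unfold l1dist; intros H.
  pose proof (Rabs_triang (fst a - fst b) (fst b - fst c)).
  pose proof (Rabs_triang (snd a - snd b) (snd b - snd c)).
  replace (fst a - fst b + (fst b - fst c)) with (fst a - fst c) in * by ring.
  replace (snd a - snd b + (snd b - snd c)) with (snd a - snd c) in * by ring.
  split; apply between_of_Rabs; lra.
Qed.

Lemma tight_cons p b l : tight p (b :: l) ->
  tight b l /\ between (fst p) (fst b) (fst (rend b l)) /\
  between (snd p) (snd b) (snd (rend b l)).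
Proof.
  unfold tight; rewrite rend_cons; simpl; intros H.
  pose proof (l1dist_rend_le_plen b l); pose proof (l1dist_triangle p b (rend b l)).
  split; [lra|]; apply between_of_l1dist; lra.
Qed.

Lemma vertical_run_covers l : forall p b,
  rpath p (b :: l) -> tight p (b :: l) -> ncorners p (b :: l) = 0%nat -> vstep p b ->
  fst (rend b l) = fst p /\
  forall z, fst z = fst p -> between (snd p) (snd z) (snd (rend b l)) ->
    on_path p (b :: l) z.
Proof.
  induction l as [|c l IH]; intros p b Hr Ht Hn [Hpb Hpb'].
  - split; [symmetry; exact Hpb|]; intros z Hz Hb.
    left; apply seg_pts_vertical; auto.
  - destruct (tight_cons _ _ _ Ht) as [Ht' [_ By]].
    destruct Hr as [_ [[Hbc|Hbc] Hr]].
    + rewrite ncorners_turn in Hn by (right; split; [split|]; assumption); discriminate.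
    + rewrite ncorners_straight in Hn by (right; split; [split|]; assumption).
      destruct (IH b c (conj (or_intror Hbc) Hr) Ht' Hn Hbc) as [Hx Hcov].
      rewrite rend_cons in *; split; [congruence|]; intros z Hz Hb.
      destruct (between_split _ _ _ _ By Hb).
      * left; apply seg_pts_vertical; auto.
      * right; apply Hcov; [congruence|assumption].
Qed.

Lemma horizontal_start_covers_hv_L l : forall p b,
  rpath p (b :: l) -> tight p (b :: l) -> (ncorners p (b :: l) <= 1)%nat -> hstep p b ->
  forall z, hv_L p (rend b l) z -> on_path p (b :: l) z.
Proof.
  induction l as [|c l IH]; intros p b Hr Ht Hn [Hpb Hpb'] z Hz.
  - destruct Hz as [[Hz Hb]|[Hz Hb]].
    + left; apply seg_pts_horizontal; auto.
    + right; apply injective_projections; [exact Hz|].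
      unfold between in Hb; simpl in Hb; lra.
  - destruct (tight_cons _ _ _ Ht) as [Ht' [Bx _]].
    rewrite rend_cons in Bx, Hz; destruct Hr as [_ [[Hbc|Hbc] Hr]].
    + rewrite ncorners_straight in Hn by (left; split; [split|]; assumption).
      pose proof (IH b c (conj (or_introl Hbc) Hr) Ht' Hn Hbc) as Hcov.
      destruct Hz as [[Hz Hb]|[Hz Hb]].
      * destruct (between_split _ _ _ _ Bx Hb).
        -- left; apply seg_pts_horizontal; auto.
        -- right; apply Hcov; left; split; [congruence|assumption].
      * right; apply Hcov; right; split; [assumption|congruence].
    + rewrite ncorners_turn in Hn by (left; split; [split|]; assumption).
      destruct (vertical_run_covers l b c (conj (or_intror Hbc) Hr) Ht' ltac:(lia) Hbc)
        as [Hx Hcov].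
      destruct Hz as [[Hz Hb]|[Hz Hb]].
      * left; apply seg_pts_horizontal; [assumption|split; [assumption|congruence]].
      * right; apply Hcov; [congruence|rewrite <- Hpb; assumption].
Qed.

Lemma tight_path_covers_L p l : rpath p l -> tight p l -> (ncorners p l <= 1)%nat ->
  (forall z, hv_L p (rend p l) z -> on_path p l z) \/
  (forall z, vh_L p (rend p l) z -> on_path p l z).
Proof.
  destruct l as [|b l]; intros Hr Ht Hn.
  - left; intros z [[Hz Hb]|[Hz Hb]]; apply injective_projections;
      unfold between in Hb; simpl in *; lra.
  - rewrite rend_cons; destruct (proj1 Hr) as [Hpb|Hpb].
    + left; apply horizontal_start_covers_hv_L; assumption.
    + right; intros z Hz; apply on_path_swap.
      pose proof (proj2 (rpath_swap p (b :: l)) Hr) as Hr'.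
      pose proof (proj2 (tight_swap p (b :: l)) Ht) as Ht'.
      pose proof (ncorners_swap p (b :: l) Hr) as Hn'.
      pose proof (rend_swap p (b :: l)) as He.
      rewrite rend_cons in He; simpl map in *.
      apply horizontal_start_covers_hv_L; [assumption|assumption|lia|assumption|].
      rewrite <- rend_cons with (p := swap p), He; exact Hz.
Qed.

Lemma hv_L_tight_path p q : exists l, rpath p l /\ rend p l = q /\ tight p l /\
  (ncorners p l <= 1)%nat /\ forall z, on_path p l z -> hv_L p q z.
Proof.
  destruct p as [px py], q as [qx qy].
  destruct (Req_EM_T px qx) as [Ex|Ex], (Req_EM_T py qy) as [Ey|Ey]; subst.
  - refine (ex_intro _ [] (conj I (conj eq_refl (conj _ (conj _ _))))).
    + unfold tight; simpl; rewrite l1dist_refl; reflexivity.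
    + simpl; lia.
    + intros z ->; left; split; [reflexivity|]; unfold between; lra.
  - refine (ex_intro _ [(qx, qy)] (conj _ (conj eq_refl (conj _ (conj _ _))))).
    + split; [right; split|]; simpl; auto.
    + unfold tight; simpl; ring.
    + simpl; lia.
    + intros z [Hz| ->]; [apply seg_pts_vertical in Hz; [|reflexivity]|];
        right; simpl in *; unfold between in *; intuition lra.
  - refine (ex_intro _ [(qx, qy)] (conj _ (conj eq_refl (conj _ (conj _ _))))).
    + split; [left; split|]; simpl; auto.
    + unfold tight; simpl; ring.
    + simpl; lia.
    + intros z [Hz| ->]; [apply seg_pts_horizontal in Hz; [|reflexivity]|];
        left; simpl in *; unfold between in *; intuition lra.
  - refine (ex_intro _ [(qx, py); (qx, qy)]
      (conj _ (conj eq_refl (conj _ (conj _ _))))).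
    + split; [left; split|split; [right; split|]]; simpl; auto.
    + unfold tight; simpl; unfold l1dist; simpl; rewrite !Rminus_diag, Rabs_R0; ring.
    + rewrite ncorners_turn; [simpl; lia|left; split; split; simpl; auto].
    + intros z [Hz|[Hz| ->]];
        [apply seg_pts_horizontal in Hz; [left|reflexivity]
        |apply seg_pts_vertical in Hz; [right|reflexivity]|right];
        simpl in *; unfold between in *; intuition lra.
Qed.

Lemma shortest_rpath_iff p q l :
  shortest_rpath p q l <-> rpath p l /\ rend p l = q /\ tight p l.
Proof.
  split.
  - intros (Hr & He & Hmin); split; [assumption|split; [assumption|]].
    destruct (hv_L_tight_path p q) as (l' & Hr' & He' & Ht' & _).
    pose proof (Hmin l' Hr' He'); pose proof (l1dist_rend_le_plen p l).
    unfold tight in *; rewrite He, He' in *; lra.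
  - intros (Hr & He & Ht); split; [assumption|split; [assumption|]].
    intros l' _ He'; pose proof (l1dist_rend_le_plen p l').
    unfold tight in Ht; rewrite Ht, He, <- He'; assumption.
Qed.

Lemma short1_swap p q l : short1 (swap p) (swap q) (map swap l) <-> short1 p q l.
Proof.
  unfold short1; rewrite !shortest_rpath_iff, rpath_swap, tight_swap, rend_swap.
  split; intros ((Hr & He & Ht) & Hn); rewrite ?ncorners_swap in * by assumption;
    (split; [split; [assumption|split; [|assumption]]|assumption]).
  - apply swap_inj; assumption.
  - rewrite He; reflexivity.
Qed.

Lemma short1_covers_L p q l : short1 p q l ->
  (forall z, hv_L p q z -> on_path p l z) \/ (forall z, vh_L p q z -> on_path p l z).
Proof.
  intros [Hs Hn]; apply shortest_rpath_iff in Hs as (Hr & He & Ht).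
  rewrite <- He; apply tight_path_covers_L; assumption.
Qed.

Lemma hv_L_short1 p q : exists l, short1 p q l /\ forall z, on_path p l z -> hv_L p q z.
Proof.
  destruct (hv_L_tight_path p q) as (l & Hr & He & Ht & Hn & Hon).
  exists l; split; [split; [apply shortest_rpath_iff|]|]; auto.
Qed.

Lemma vh_L_short1 p q : exists l, short1 p q l /\ forall z, on_path p l z -> vh_L p q z.
Proof.
  destruct (hv_L_short1 (swap p) (swap q)) as (l & Hs & Hon).
  exists (map swap l); split.
  - apply short1_swap in Hs; rewrite !swap_involutive in Hs; exact Hs.
  - intros z Hz; apply Hon, on_path_swap; rewrite !swap_involutive; exact Hz.
Qed.

Definition open_unit_square (z : pt) : Prop := 0 < fst z < 1 /\ 0 < snd z < 1.

Lemma L_paths_meet_unit_diagonal p q :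
  ~ open_unit_square p -> ~ open_unit_square q ->
  (exists z, hv_L p q z /\ open_unit_square z) ->
  (exists z, vh_L p q z /\ open_unit_square z) ->
  (exists t, 0 <= t <= 1 /\ hv_L p q (t, t)) /\
  (exists t, 0 <= t <= 1 /\ vh_L p q (t, t)).
Proof.
  destruct p as [a b], q as [c e].
  (* [hv_L] crosses the diagonal at height b on its horizontal leg or at abscissa c on
     its vertical leg; symmetrically for [vh_L]. *)
  unfold open_unit_square, vh_L, hv_L, between; simpl.
  intros Hp Hq [[u v] [Hh Ih]] [[u' v'] [Hv Iv]]; simpl in *.
  assert (Ch : (0 <= b <= 1 /\ between a b c) \/ (0 <= c <= 1 /\ between b c e))
    by (unfold between; lra).
  assert (Cv : (0 <= a <= 1 /\ between b a e) \/ (0 <= e <= 1 /\ between a e c))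
    by (unfold between; lra).
  split.
  - destruct Ch as [[? ?]|[? ?]]; [exists b|exists c]; simpl; auto.
  - destruct Cv as [[? ?]|[? ?]]; [exists a|exists e]; simpl; auto.
Qed.

Definition stretch (o : pt) (a b : R) (z : pt) : pt :=
  (fst o + a * fst z, snd o + b * snd z).

Lemma stretch_onto o a b z : a <> 0 -> b <> 0 -> exists z', z = stretch o a b z'.
Proof.
  intros Ha Hb; exists ((fst z - fst o) / a, (snd z - snd o) / b).
  apply injective_projections; simpl; field; assumption.
Qed.

Lemma affine_inj c k x y : k <> 0 -> c + k * x = c + k * y <-> x = y.
Proof.
  intros Hk; split; [|intros ->; reflexivity].
  intros E; apply (Rmult_eq_reg_l k); [lra|assumption].
Qed.

Lemma between_affine c k x y z :
  k <> 0 -> between (c + k * x) (c + k * y) (c + k * z) <-> between x y z.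
Proof.
  unfold between; intros Hk.
  destruct (Rlt_or_le 0 k); [|assert (k < 0) by lra]; split; intros; nra.
Qed.

Lemma hv_L_stretch o a b p q z : a <> 0 -> b <> 0 ->
  hv_L (stretch o a b p) (stretch o a b q) (stretch o a b z) <-> hv_L p q z.
Proof.
  intros Ha Hb; unfold hv_L, stretch; simpl.
  rewrite !affine_inj, !between_affine by assumption; tauto.
Qed.

Lemma vh_L_stretch o a b p q z : a <> 0 -> b <> 0 ->
  vh_L (stretch o a b p) (stretch o a b q) (stretch o a b z) <-> vh_L p q z.
Proof. intros Ha Hb; exact (hv_L_stretch (swap o) b a (swap p) (swap q) (swap z) Hb Ha). Qed.

Lemma L_paths_meet_diagonal (w : pt -> Prop) (d : segment) o a b p q :
  a <> 0 -> b <> 0 ->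
  (forall z, Defs.interior w (stretch o a b z) <-> open_unit_square z) ->
  (forall t, 0 <= t <= 1 -> seg_set d (stretch o a b (t, t))) ->
  ~ Defs.interior w p -> ~ Defs.interior w q ->
  (exists z, hv_L p q z /\ Defs.interior w z) ->
  (exists z, vh_L p q z /\ Defs.interior w z) ->
  (exists z, hv_L p q z /\ seg_set d z) /\ (exists z, vh_L p q z /\ seg_set d z).
Proof.
  intros Ha Hb Hw Hd Hp Hq [z [Hz Iz]] [z' [Hz' Iz']].
  destruct (stretch_onto o a b p Ha Hb) as [p0 ->].
  destruct (stretch_onto o a b q Ha Hb) as [q0 ->].
  destruct (stretch_onto o a b z Ha Hb) as [z0 ->].
  destruct (stretch_onto o a b z' Ha Hb) as [z0' ->].
  rewrite Hw in Hp, Hq, Iz, Iz'.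
  rewrite hv_L_stretch in Hz by assumption; rewrite vh_L_stretch in Hz' by assumption.
  destruct (L_paths_meet_unit_diagonal p0 q0 Hp Hq (ex_intro _ z0 (conj Hz Iz))
    (ex_intro _ z0' (conj Hz' Iz'))) as [[t [Ht Hh]] [t' [Ht' Hv]]].
  split; [exists (stretch o a b (t, t))|exists (stretch o a b (t', t'))];
    rewrite ?hv_L_stretch, ?vh_L_stretch by assumption; auto.
Qed.

Lemma interior_rect x1 x2 y1 y2 z :
  Defs.interior (rect x1 x2 y1 y2) z <-> x1 < fst z < x2 /\ y1 < snd z < y2.
Proof.
  unfold rect; split.
  - intros [e [He H]].
    assert (Hnear : forall dx dy, -e < dx < e -> -e < dy < e ->
      x1 <= fst z + dx <= x2 /\ y1 <= snd z + dy <= y2).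
    { intros dx dy Hx Hy; apply (H (fst z + dx, snd z + dy)); simpl;
        apply Rabs_def1; lra. }
    pose proof (Hnear (- (e / 2)) 0); pose proof (Hnear (e / 2) 0).
    pose proof (Hnear 0 (- (e / 2))); pose proof (Hnear 0 (e / 2)).
    lra.
  - intros [Hx Hy].
    set (ex := Rmin (fst z - x1) (x2 - fst z)); set (ey := Rmin (snd z - y1) (y2 - snd z)).
    exists (Rmin ex ey); split; [repeat apply Rmin_pos; lra|].
    intros y Dx Dy; apply Rabs_def2 in Dx, Dy.
    pose proof (Rmin_l ex ey); pose proof (Rmin_r ex ey).
    pose proof (Rmin_l (fst z - x1) (x2 - fst z)).
    pose proof (Rmin_r (fst z - x1) (x2 - fst z)).
    pose proof (Rmin_l (snd z - y1) (y2 - snd z)).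
    pose proof (Rmin_r (snd z - y1) (y2 - snd z)).
    unfold ex, ey in *; lra.
Qed.

Lemma rect_diagonal_stretch x1 x2 y1 y2 (d : segment) : x1 < x2 -> y1 < y2 ->
  d = ((x1, y1), (x2, y2)) \/ d = ((x1, y2), (x2, y1)) ->
  exists o a b, a <> 0 /\ b <> 0 /\
    (forall z, Defs.interior (rect x1 x2 y1 y2) (stretch o a b z) <-> open_unit_square z) /\
    (forall t, 0 <= t <= 1 -> seg_set d (stretch o a b (t, t))).
Proof.
  intros hx hy [-> | ->].
  - exists (x1, y1), (x2 - x1), (y2 - y1); split; [lra|split; [lra|split]].
    + intros z; rewrite interior_rect; unfold open_unit_square, stretch; simpl.
      split; intros [[? ?] [? ?]]; split; split; nra.
    + intros t Ht; exists t; simpl; split; [assumption|split; ring].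
  - (* the anti-diagonal is the image of the unit diagonal when the y-axis is reversed *)
    exists (x1, y2), (x2 - x1), (y1 - y2); split; [lra|split; [lra|split]].
    + intros z; rewrite interior_rect; unfold open_unit_square, stretch; simpl.
      split; intros [[? ?] [? ?]]; split; split; nra.
    + intros t Ht; exists t; simpl; split; [assumption|split; ring].
Qed.

Lemma inside_rect_diagonal x1 x2 y1 y2 (d : segment) : x1 < x2 -> y1 < y2 ->
  d = ((x1, y1), (x2, y2)) \/ d = ((x1, y2), (x2, y1)) ->
  inside (rect x1 x2 y1 y2) [d].
Proof.
  intros hx hy hd s z [<-|[]] [t [Ht [Hx Hy]]]; unfold rect; rewrite Hx, Hy.
  destruct hd as [->| ->]; simpl; split; split; nra.
Qed.

Lemma nil_not_skeleton (w : pt -> Prop) p q z :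
  ~ Defs.interior w p -> ~ Defs.interior w q -> snd p = snd q ->
  snd z = snd p -> between (fst p) (fst z) (fst q) -> Defs.interior w z ->
  ~ skeleton w [].
Proof.
  intros Hp Hq Hpq Hz Bz Iz [_ Hskel].
  destruct (hv_L_short1 p q) as [l0 [Hl0 _]].
  assert (Hmeet : forall l, short1 p q l -> exists y, on_path p l y /\ Defs.interior w y).
  { intros l Hl; exists z; split; [|exact Iz].
    destruct (short1_covers_L p q l Hl) as [Hcov|Hcov]; apply Hcov;
      [left | unfold vh_L, hv_L; simpl; right]; split; assumption || congruence. }
  destruct (Hskel p q Hp Hq Hmeet l0 Hl0) as (s & _ & [] & _).
Qed.

Lemma rect_diagonal_skeleton x1 x2 y1 y2 (d : segment) : x1 < x2 -> y1 < y2 ->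
  d = ((x1, y1), (x2, y2)) \/ d = ((x1, y2), (x2, y1)) ->
  skeleton (rect x1 x2 y1 y2) [d].
Proof.
  intros hx hy hd; split; [apply inside_rect_diagonal; assumption|].
  intros p q Hp Hq Hmeet l Hl.
  destruct (rect_diagonal_stretch x1 x2 y1 y2 d hx hy hd) as (o & a & b & Ha & Hb & Hw & Hd).
  destruct (hv_L_short1 p q) as (lh & Hlh & Hh).
  destruct (vh_L_short1 p q) as (lv & Hlv & Hv).
  destruct (Hmeet lh Hlh) as (zh & Ozh & Izh).
  destruct (Hmeet lv Hlv) as (zv & Ozv & Izv).
  destruct (L_paths_meet_diagonal _ d o a b p q Ha Hb Hw Hd Hp Hq
    (ex_intro _ zh (conj (Hh zh Ozh) Izh)) (ex_intro _ zv (conj (Hv zv Ozv) Izv)))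
    as [(wh & Wh & Dh) (wv & Wv & Dv)].
  destruct (short1_covers_L p q l Hl) as [Hcov|Hcov].
  - exists d, wh; split; [left; reflexivity|split; [exact Dh|exact (Hcov wh Wh)]].
  - exists d, wv; split; [left; reflexivity|split; [exact Dv|exact (Hcov wv Wv)]].
Qed.

Theorem corollary1 (x1 x2 y1 y2 : R) (hx : x1 < x2) (hy : y1 < y2)
  (d : segment)
  (hd : d = ((x1, y1), (x2, y2)) \/ d = ((x1, y2), (x2, y1))) :
  min_skeleton (rect x1 x2 y1 y2) [d].
Proof.
  split; [apply rect_diagonal_skeleton; assumption|].
  intros [|s S] HS; [exfalso|simpl; lia].
  set (m := (y1 + y2) / 2).
  apply (nil_not_skeleton (rect x1 x2 y1 y2) (x1, m) (x2, m) ((x1 + x2) / 2, m));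
    [..|exact HS]; rewrite ?interior_rect; simpl; unfold between, m; lra.
Qed.
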